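(* Let $\alpha$ be an algebraic integer lying in a quadratic number field. Then there is a natural number $n$ such that $\alpha+n$ is a chromatic root.
   Context: For a finite simple graph $G$, the chromatic polynomial $P_G(q)$ is the unique polynomial whose value at each positive integer $q$ is the number of proper colourings of $G$ with $q$ colours. A chromatic root is a complex number $\alpha$ such that $P_G(\alpha)=0$ for some finite simple graph $G$. A quadratic number field is a field extension of $\mathbb{Q}$ of degree $2$. *)

From HB Require Import structures.
From mathcomp Require Import all_boot all_order all_algebra all_field.
Set Implicit Arguments. Unset Strict Implicit. Unset Printing Implicit Defensive.
Import Order.TTheory GRing.Theory Num.Theory.
Local Open Scope ring_scope.

Definition simple_graph (V : finType) (e : rel V) : Prop :=
  symmetric e /\ irreflexive e.

Definition num_proper_colourings (V : finType) (e : rel V) (q : nat) : nat :=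
  #|[set f : {ffun V -> 'I_q} | [forall x, forall y, e x y ==> (f x != f y)]]|.

(* p is the chromatic polynomial of (V, e): its value at every positive
   integer q is the number of proper q-colourings (such p is unique). *)
Definition is_chromatic_poly (V : finType) (e : rel V) (p : {poly algC}) : Prop :=
  forall q : nat, (0 < q)%N -> p.[q%:R] = (num_proper_colourings e q)%:R.

(* A chromatic root: a (complex) root of the chromatic polynomial of some
   finite simple graph. Chromatic roots are algebraic, so algC suffices. *)
Definition chromatic_root (a : algC) : Prop :=
  exists (V : finType) (e : rel V) (p : {poly algC}),
    [/\ simple_graph e, is_chromatic_poly e p & root p a].

Definition in_quadratic_field (a : algC) : Prop :=
  exists (L : fieldExtType rat) (f : {rmorphism L -> algC}) (x : L),
    \dim (fullv : {vspace L}) = 2%N /\ f x = a.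

From HB Require Import structures.
From mathcomp Require Import all_boot all_order all_algebra all_field.
From mathcomp Require Import ring zify.
Set Implicit Arguments. Unset Strict Implicit. Unset Printing Implicit Defensive.
Import Order.TTheory GRing.Theory Num.Theory.
Local Open Scope ring_scope.

(* Translating a monic integer quadratic X^2 - bX + c by a large enough
   integer n turns it into (X - s)(X - t) - (X - (s + t)) for some naturals
   s and t. This is the quadratic factor of the chromatic polynomial
   q ^_ (s + t) ((q - t)(q - s) - (q - (s + t))) of the graph G_(s,t) made of a clique
   K_(s+t), split into parts S and T of sizes s and t, and an extra edge xy
   with x joined to T and y joined to S: colour the clique injectively, then
   x avoiding the colours of T and y avoiding those of S, with x <> y.
   An algebraic integer in a quadratic field is a root of a monic integer
   quadratic, so it becomes a chromatic root after translation by n. *)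

Lemma size_minCpoly_quadratic (a : algC) :
  in_quadratic_field a -> (size (minCpoly a) <= 3)%N.
Proof.
case=> L [f [x [dimL <-]]].
have /polyOver1P[q Dq] := minPolyOver 1 x.
have q_neq0 : q != 0.
  by rewrite -(map_poly_eq0 (in_alg L)) -Dq monic_neq0 ?monic_minPoly.
have size_q : (size q <= 3)%N.
  rewrite -(size_map_poly (in_alg L)) -Dq size_minPoly ltnS -dimL.
  by have := dim_Fadjoin 1 x; rewrite dimv1 muln1 => <-; rewrite dimvS ?subvf.
have root_q : root (map_poly ratr q) (f x).
  have := root_minPoly 1 x; rewrite Dq -(fmorph_root f) -map_poly_comp.
  by congr (root _ _); apply: eq_map_poly => r /=; rewrite alg_num_field fmorph_rat.
have [p [-> _ root_p]] := minCpolyP (f x).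
rewrite size_map_poly (leq_trans _ size_q) // dvdp_leq // -root_p; exact: root_q.
Qed.

Lemma Aint_quadratic_eq (a : algC) : a \in Aint -> (size (minCpoly a) <= 3)%N ->
  exists b c : int, a ^+ 2 - b%:~R * a + c%:~R = 0.
Proof.
rewrite unfold_in => /polyOverP Zp size_p.
set p := minCpoly a in Zp size_p.
have p_neq0 : p != 0 := monic_neq0 (minCpoly_monic a).
(* Padding p with a power of 'X makes its degree exactly 2. *)
pose r := p * 'X^(3 - size p).
have size_r : size r = 3%N by rewrite size_mulXn // subnK.
have r2 : r`_2 = 1.
  have /monicP : r \is monic by rewrite monicMr ?monicXn ?minCpoly_monic.
  by rewrite /lead_coef size_r.
have Zr i : r`_i \in Num.int by rewrite coefMXn; case: ifP.
have [b1 r1] := intrP (Zr 1%N).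
have [c r0] := intrP (Zr 0%N).
exists (- b1), c.
have : r.[a] = 0 by rewrite hornerM hornerXn (rootP (root_minCpoly a)) mul0r.
rewrite horner_coef size_r !big_ord_recr big_ord0 /= add0r expr0 expr1 mulr1 r2 mul1r.
by rewrite r0 r1 rmorphN /= => <-; ring.
Qed.

Lemma quadratic_shift_params (b c : int) : exists s t n : nat,
  (s + t + 1)%:R = b + 2 * n%:R :> int /\
  (s * t + s + t)%:R = c + n%:R ^+ 2 + b * n%:R :> int.
Proof.
(* With t = k and s = k + d both equations become identities in j, which is
   taken large enough for k and d to be nonnegative. *)
pose j : int := (`|b| + `|c| + 1)%:R.
pose k : int := j ^+ 2 + j * b + c.
pose d : int := b + 2 * j + 1.
have j_ge1 : 1 <= j by rewrite /j; lia.
have b_ge : - (j - 1) <= b by rewrite /j; lia.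
have c_ge : - (j - 1) <= c by rewrite /j; lia.
have k_ge0 : 0 <= k.
  have : j * (- (j - 1)) <= j * b by rewrite ler_pM2l //; lia.
  rewrite /k; nia.
have d_ge0 : 0 <= d by rewrite /d; lia.
exists (absz (d + k)), (absz k), (absz j + 1 + absz k)%N.
have absK (z : int) : 0 <= z -> (absz z)%:R = z by move=> z_ge0; rewrite natz gez0_abs.
rewrite !natrD !natrM !absK; first by rewrite /d /k; split; ring.
all: lia.
Qed.

Lemma natr_ffact (R : pzRingType) (q m : nat) :
  (q ^_ m)%:R = \prod_(i < m) (q%:R - i%:R) :> R.
Proof.
elim: m => [|m IH]; first by rewrite ffactn0 big_ord0.
rewrite big_ord_recr /= -IH ffactnSr natrM.
by case: (leqP m q) => [le_mq | lt_qm]; [rewrite natrB | rewrite ffact_small // !mul0r].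
Qed.

Section ChromaticPolynomial.
Variable R : comNzRingType.

Definition gst_quadratic (s t : nat) : {poly R} :=
  ('X - t%:R%:P) * ('X - s%:R%:P) - ('X - (s + t)%:R%:P).

Definition gst_chromatic_poly (s t : nat) : {poly R} :=
  \prod_(i < s + t) ('X - i%:R%:P) * gst_quadratic s t.

Lemma horner_gst_chromatic_poly (s t q : nat) :
  (gst_chromatic_poly s t).[q%:R] =
  (q ^_ (s + t) * ((q - t) * (q - s) - (q - (s + t))))%:R.
Proof.
rewrite hornerM horner_prod natrM natr_ffact.
under eq_bigr do rewrite hornerXsubC.
have [le_st_q | lt_q_st] := leqP (s + t) q; last by rewrite -natr_ffact ffact_small // !mul0r.
have le_q_st : (q - (s + t) <= (q - t) * (q - s))%N by nia.
by rewrite /gst_quadratic !hornerE natrB // natrM !natrB // ?natrD; lia.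
Qed.

Lemma gst_quadratic_shift (b c : int) (s t n : nat) (x : R) :
  (s + t + 1)%:R = b + 2 * n%:R :> int ->
  (s * t + s + t)%:R = c + n%:R ^+ 2 + b * n%:R :> int ->
  (gst_quadratic s t).[x + n%:R] = x ^+ 2 - b%:~R * x + c%:~R.
Proof.
move=> /(congr1 (intr : int -> R)) sum_st /(congr1 (intr : int -> R)) prod_st.
rewrite !rmorphD !rmorphM !rmorph_nat /= in sum_st prod_st.
rewrite /gst_quadratic !hornerE natrD.
transitivity ((x + n%:R) ^+ 2 - (s%:R + t%:R + 1) * (x + n%:R) + (s%:R * t%:R + s%:R + t%:R)).
  by ring.
by rewrite sum_st prod_st; ring.
Qed.

End ChromaticPolynomial.

Lemma card_dep_pairs (I J : finType) (P : pred I) (Q : I -> pred J) :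
  #|[set p : I * J | P p.1 && Q p.1 p.2]| = (\sum_(i | P i) #|[set j | Q i j]|)%N.
Proof.
rewrite -sum1dep_card -(pair_big_dep P Q (fun _ _ => 1%N)).
by apply: eq_bigr => i _; rewrite sum1dep_card.
Qed.

Lemma card_avoiding_pairs (T : finType) (A B : {set T}) :
  #|[set p : T * T | [&& p.1 \notin A, p.2 \notin B & p.1 != p.2]]| =
  (#|~: A| * #|~: B| - #|~: (A :|: B)|)%N.
Proof.
have diag_inj : injective (fun x : T => (x, x)) by move=> x y [].
set D := [set (x, x) | x in ~: (A :|: B)].
have -> : [set p : T * T | [&& p.1 \notin A, p.2 \notin B & p.1 != p.2]] =
          setX (~: A) (~: B) :\: D.
  apply/setP => [[x y]]; rewrite !inE /=.
  have [<-|xy] := eqVneq x y.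
    by rewrite mem_imset // !inE; case: (x \in A); case: (x \in B); rewrite ?andbF.
  have -> : (x, y) \in D = false.
    by apply/imsetP => -[z _ [xz yz]]; rewrite xz yz eqxx in xy.
  by rewrite andbT.
rewrite cardsD cardsX (setIidPr _) ?card_imset //.
by apply/subsetP => _ /imsetP[x + ->]; rewrite !inE negb_or.
Qed.

Definition proper_colouring (V : finType) (e : rel V) (q : nat) (f : {ffun V -> 'I_q}) :=
  [forall u, forall v, e u v ==> (f u != f v)].

(* G_(s,t): the clique on ['I_s + 'I_t] plus two adjacent apexes, [inr true]
   joined to the ['I_t] part and [inr false] to the ['I_s] part. *)
Definition gst_vertex (s t : nat) : finType := ('I_s + 'I_t + bool)%type.

Definition in_t_part (s t : nat) (w : 'I_s + 'I_t) : bool :=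
  if w is inr _ then true else false.

Definition gst_adj (s t : nat) : rel (gst_vertex s t) := fun u v =>
  match u, v with
  | inl w, inl w' => w != w'
  | inl w, inr b | inr b, inl w => in_t_part w == b
  | inr b, inr b' => b != b'
  end.
Arguments gst_adj : clear implicits.

Lemma gst_simple (s t : nat) : simple_graph (gst_adj s t).
Proof.
split; first by move=> [[i|i]|b] [[j|j]|b'] //=; rewrite eq_sym.
by move=> [[i|i]|b] /=; rewrite eqxx.
Qed.

Section Colourings.
Variables s t q : nat.

Definition clique_colouring := {ffun 'I_s + 'I_t -> 'I_q}.

Definition avoiding_pair (g : clique_colouring) (p : 'I_q * 'I_q) : bool :=
  [&& p.1 \notin [set g (inr j) | j : 'I_t],
      p.2 \notin [set g (inl i) | i : 'I_s] & p.1 != p.2].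

Definition join_colouring (u : clique_colouring * ('I_q * 'I_q)) :
  {ffun gst_vertex s t -> 'I_q} :=
  [ffun v => match v with
             | inl w => u.1 w | inr true => u.2.1 | inr false => u.2.2 end].

Definition split_colouring (f : {ffun gst_vertex s t -> 'I_q}) :
  clique_colouring * ('I_q * 'I_q) :=
  ([ffun w => f (inl w)], (f (inr true), f (inr false))).

Lemma join_colouringK : cancel join_colouring split_colouring.
Proof.
move=> [g [x y]]; rewrite /split_colouring !ffunE.
by congr (_, _); apply/ffunP => w; rewrite !ffunE.
Qed.

Lemma split_colouringK : cancel split_colouring join_colouring.
Proof. by move=> f; apply/ffunP => [[w|[]]]; rewrite !ffunE. Qed.

Lemma proper_join_colouring g p :
  proper_colouring (gst_adj s t) (join_colouring (g, p)) =
  injectiveb g && avoiding_pair g p.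
Proof.
case: p => x y; apply/idP/idP.
- move=> /forallP proper.
  have adj u v : gst_adj s t u v ->
      join_colouring (g, (x, y)) u != join_colouring (g, (x, y)) v.
    by move: (proper u) => /forallP/(_ v)/implyP.
  apply/and4P; split.
  + apply/injectiveP => w w' gw; apply/eqP/negPn/negP => ww'.
    by have := adj (inl w) (inl w') ww'; rewrite !ffunE gw eqxx.
  + apply/imsetP => -[j _ xg].
    by have := adj (inl (inr j)) (inr true) isT; rewrite !ffunE xg eqxx.
  + apply/imsetP => -[i _ yg].
    by have := adj (inl (inl i)) (inr false) isT; rewrite !ffunE yg eqxx.
  + by have := adj (inr true) (inr false) isT; rewrite !ffunE.
- case/and4P => /injectiveP g_inj xT yS xy.
  have gTx j : g (inr j) != x by apply: contraNneq xT => <-; apply: imset_f.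
  have gSy i : g (inl i) != y by apply: contraNneq yS => <-; apply: imset_f.
  apply/forallP => u; apply/forallP => v; apply/implyP.
  case: u => [[i|j]|[]]; case: v => [[i'|j']|[]] //= uv; rewrite !ffunE //=.
  all: by rewrite ?(inj_eq g_inj) // eq_sym.
Qed.

Lemma card_avoiding_pair (g : clique_colouring) : injectiveb g ->
  #|[set p | avoiding_pair g p]| = ((q - t) * (q - s) - (q - (s + t)))%N.
Proof.
move=> /injectiveP g_inj.
have cardC (A : {set 'I_q}) : #|~: A| = (q - #|A|)%N.
  by have := cardsC A; rewrite card_ord; lia.
have cardT : #|[set g (inr j) | j : 'I_t]| = t.
  by rewrite card_imset ?card_ord // => j j' /g_inj [].
have cardS : #|[set g (inl i) | i : 'I_s]| = s.
  by rewrite card_imset ?card_ord // => i i' /g_inj [].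
rewrite card_avoiding_pairs !cardC cardT cardS.
have -> : [set g (inr j) | j : 'I_t] :|: [set g (inl i) | i : 'I_s] =
          [set g w | w : 'I_s + 'I_t].
  apply/setP => c; apply/setUP/imsetP => [[] /imsetP[w _ ->]|[[i|j] _ ->]].
  - by exists (inr w).
  - by exists (inl w).
  - by right; apply: imset_f.
  - by left; apply: imset_f.
by rewrite card_imset // card_sum !card_ord addnC.
Qed.

Lemma card_gst_colourings :
  num_proper_colourings (gst_adj s t) q =
  (q ^_ (s + t) * ((q - t) * (q - s) - (q - (s + t))))%N.
Proof.
rewrite /num_proper_colourings -(on_card_preimset (f := join_colouring)); last first.
  by apply: onW_bij; exists split_colouring; [exact: join_colouringK | exact: split_colouringK].
rewrite (eq_card (B := [set u : clique_colouring * _ | injectiveb u.1 && avoiding_pair u.1 u.2])); last first.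
  by move=> [g p]; rewrite !inE; exact: proper_join_colouring.
rewrite (card_dep_pairs (fun g : clique_colouring => injectiveb g) avoiding_pair).
rewrite (eq_bigr _ card_avoiding_pair) sum_nat_const.
have := card_inj_ffuns ('I_s + 'I_t)%type 'I_q; rewrite card_sum !card_ord => <-.
by congr (_ * _)%N; apply: eq_card => g; rewrite inE.
Qed.

End Colourings.

Theorem theorem4 (a : algC) :
  a \in Aint -> in_quadratic_field a ->
  exists n : nat, chromatic_root (a + n%:R).
Proof.
move=> Aa Qa; have [b [c abc]] := Aint_quadratic_eq Aa (size_minCpoly_quadratic Qa).
have [s [t [n [sum_st prod_st]]]] := quadratic_shift_params b c.
exists n, (gst_vertex s t), (gst_adj s t), (gst_chromatic_poly algC s t); split.
- exact: gst_simple.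
- by move=> q _; rewrite horner_gst_chromatic_poly card_gst_colourings.
- by rewrite rootM orbC /root (gst_quadratic_shift _ sum_st prod_st) abc eqxx.
Qed.
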